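(* Let $\alpha>0$ and for $w\in\mathbb{D}$ and $i\in\mathbb{N}$ set $f_w^{[i]}(z)=\frac{z^i}{(1-\overline{w}z)^{\alpha+i}}$, $z\in\mathbb{D}$. Then for each $i\ge1$, $\|f_w^{[i]}\|_{\mathcal{B}^{\alpha}}\simeq\frac{1}{(1-|w|^2)^{i+1}}$ for all $w\in\mathbb{D}$, and $\|f_w^{[0]}\|_{\mathcal{B}^{\alpha}}\simeq\frac{1}{1-|w|^2}$ for all $w\in\mathbb{D}$ with $|w|>\frac12$.
   Context: $\mathbb{D}$ is the open unit disc in $\mathbb{C}$. For $\alpha>0$, $\mathcal{B}^{\alpha}$ is the space of analytic $f$ on $\mathbb{D}$ with $\|f\|_{\mathcal{B}^{\alpha}}=|f(0)|+\sup_{z\in\mathbb{D}}(1-|z|^2)^{\alpha}|f'(z)|<\infty$. $A\simeq B$ means there are constants $C_1,C_2>0$ independent of $w$ (possibly depending on $\alpha$ and $i$) with $C_1B\le A\le C_2B$. *)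

From Stdlib Require Import Reals.
From Coquelicot Require Import Coquelicot.
Open Scope R_scope.

(* Principal argument, valid (and only used) on the right half-plane Re u > 0,
   where it equals atan (Im u / Re u) in (-pi/2, pi/2). *)
Definition Arg_rhp (u : C) : R := atan (Im u / Re u).

(* Principal branch of the complex power u^s for real s, on Re u > 0:
   u^s = exp (s * Log u),  Log u = ln |u| + i Arg u. *)
Definition cpowR (u : C) (s : R) : C :=
  let m := exp (s * ln (Cmod u)) in
  let t := s * Arg_rhp u in
  (m * cos t, m * sin t).

Fixpoint cpown (z : C) (n : nat) : C :=
  match n with O => RtoC 1 | S k => Cmult z (cpown z k) end.

Definition inD (z : C) : Prop := Cmod z < 1.

Definition analytic_on_D (f : C -> C) : Prop :=
  forall z : C, inD z -> exists l : C, @is_derive C_AbsRing C_NormedModule f z l.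

(* ||f||_{B^alpha} = |f(0)| + sup_{z in D} (1-|z|^2)^alpha |f'(z)|, in Rbar
   (value +oo when the sup is infinite). *)
Definition Bnorm (alpha : R) (f : C -> C) : Rbar :=
  Rbar_plus (Finite (Cmod (f (RtoC 0))))
    (Lub_Rbar (fun r => exists z : C, inD z /\
        exists l : C, @is_derive C_AbsRing C_NormedModule f z l /\
        r = Rpower (1 - Cmod z ^ 2) alpha * Cmod l)).

Definition fw (alpha : R) (i : nat) (w : C) (z : C) : C :=
  Cdiv (cpown z i) (cpowR (Cminus (RtoC 1) (Cmult (Cconj w) z)) (alpha + INR i)).

(* Write [U = 1 - conj w * z]. Then
   (f_w^[i])'(z) = (i z^(i-1) + alpha conj(w) z^i) U^(-(alpha + i + 1)),
   and since both [1 - |z|^2] and [1 - |w|^2] are at most [2 |U|], the weighted derivative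
   (1 - |z|^2)^alpha |f'(z)| is bounded by a constant times (1 - |w|^2)^(-(i+1)).
   For the lower bound, evaluate at the point z of modulus (1 + |w|)/2 in the direction of w:
   there |U| <= 1 - |w|^2 and 1 - |z|^2 >= (1 - |w|^2)/4, while the polynomial factor is at
   least (1/2)^(i-1) when i >= 1, and equals alpha |w| > alpha/2 when i = 0 (hence the
   restriction |w| > 1/2 in that case). Complex differentiability of the principal power
   u^s = exp (s Log u) on the right half-plane comes from the Cauchy-Riemann equations. *)

From Stdlib Require Import Reals Lra.
From Coquelicot Require Import Coquelicot.
Open Scope R_scope.
Set Bullet Behavior "Strict Subproofs".

Lemma differentiable_pt_lim_linear (a b x y : R) :
  differentiable_pt_lim (fun u v => a * u + b * v) x y a b.
Proof.
  intros eps; exists eps; intros u v _ _.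
  replace (a * u + b * v - (a * x + b * y) - (a * (u - x) + b * (v - y))) with 0 by ring.
  rewrite Rabs_R0; apply Rmult_le_pos; [apply Rlt_le, cond_pos|].
  eapply Rle_trans; [apply Rabs_pos|apply Rmax_l].
Qed.

Lemma differentiable_pt_lim_ext_eq (f g : R -> R -> R) (x y lx ly lx' ly' : R) :
  (forall u v, f u v = g u v) -> lx = lx' -> ly = ly' ->
  differentiable_pt_lim f x y lx ly -> differentiable_pt_lim g x y lx' ly'.
Proof.
  intros Hfg <- <-; apply differentiable_pt_lim_ext, locally_2d_forall, Hfg.
Qed.

Lemma differentiable_pt_lim_fst (x y : R) : differentiable_pt_lim (fun u _ => u) x y 1 0.
Proof.
  apply (differentiable_pt_lim_ext_eq (fun u v => 1 * u + 0 * v) _ x y 1 0); try easy.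
  - intros; ring.
  - apply differentiable_pt_lim_linear.
Qed.

Lemma differentiable_pt_lim_snd (x y : R) : differentiable_pt_lim (fun _ v => v) x y 0 1.
Proof.
  apply (differentiable_pt_lim_ext_eq (fun u v => 0 * u + 1 * v) _ x y 0 1); try easy.
  - intros; ring.
  - apply differentiable_pt_lim_linear.
Qed.

Lemma differentiable_pt_lim_Rmult (x y : R) :
  differentiable_pt_lim (fun a b => a * b) x y y x.
Proof.
  intros eps; exists eps; intros u v Hu Hv.
  replace (u * v - x * y - (y * (u - x) + x * (v - y))) with ((u - x) * (v - y)) by ring.
  rewrite Rabs_mult.
  apply Rmult_le_compat; try apply Rabs_pos.
  - now apply Rlt_le.
  - apply Rmax_r.
Qed.

Lemma differentiable_pt_lim_mult (f g : R -> R -> R) (x y fx fy gx gy : R) :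
  differentiable_pt_lim f x y fx fy -> differentiable_pt_lim g x y gx gy ->
  differentiable_pt_lim (fun u v => f u v * g u v) x y
    (fx * g x y + f x y * gx) (fy * g x y + f x y * gy).
Proof.
  intros Hf Hg; eapply differentiable_pt_lim_ext_eq.
  4: apply (differentiable_pt_lim_comp (fun a b => a * b) f g x y);
       [apply differentiable_pt_lim_Rmult|exact Hf|exact Hg].
  all: intros; cbv beta; ring.
Qed.

Lemma differentiable_pt_lim_plus (f g : R -> R -> R) (x y fx fy gx gy : R) :
  differentiable_pt_lim f x y fx fy -> differentiable_pt_lim g x y gx gy ->
  differentiable_pt_lim (fun u v => f u v + g u v) x y (fx + gx) (fy + gy).
Proof.
  intros Hf Hg; eapply differentiable_pt_lim_ext_eq.
  4: apply (differentiable_pt_lim_comp (fun a b => 1 * a + 1 * b) f g x y);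
       [apply differentiable_pt_lim_linear|exact Hf|exact Hg].
  all: intros; cbv beta; ring.
Qed.

Lemma differentiable_pt_lim_comp_1d (g : R -> R) (h : R -> R -> R) (x y dg hx hy : R) :
  derivable_pt_lim g (h x y) dg -> differentiable_pt_lim h x y hx hy ->
  differentiable_pt_lim (fun u v => g (h u v)) x y (dg * hx) (dg * hy).
Proof.
  intros Hg Hh; eapply differentiable_pt_lim_ext_eq.
  4: apply (differentiable_pt_lim_comp (fun a _ => g a) h h x y);
       [apply differentiable_pt_lim_proj1_0, Hg|exact Hh|exact Hh].
  all: intros; cbv beta; ring.
Qed.

(** * Complex exponential, logarithm and powers *)

(* [Bnorm] is phrased with [C_NormedModule], whereas Coquelicot's product and chain rules
   over [C_AbsRing] produce derivatives in [AbsRing_NormedModule C_AbsRing]. *)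
Lemma is_derive_C_NormedModule_iff (f : C -> C) (z l : C) :
  @is_derive C_AbsRing C_NormedModule f z l <->
  @is_derive C_AbsRing (AbsRing_NormedModule C_AbsRing) f z l.
Proof.
  split; intros [_ H]; (split; [apply is_linear_scal_l|]);
    intros x Hx eps; exact (filter_imp _ _ (fun y h => h) (H x Hx eps)).
Qed.

Notation is_C_derive f z l := (@is_derive C_AbsRing (AbsRing_NormedModule C_AbsRing) f z l).

Lemma Cmod_le_of_Rabs_le (c : C) (K : R) :
  Rabs (fst c) <= K -> Rabs (snd c) <= K -> Cmod c <= 2 * K.
Proof.
  intros Hre Him.
  assert (Hs : sqrt 2 <= 2) by (rewrite <- (sqrt_square 2) at 2 by lra; apply sqrt_le_1_alt; lra).
  assert (HK : Rmax (Rabs (fst c)) (Rabs (snd c)) <= K) by now apply Rmax_lub.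
  assert (0 <= Rmax (Rabs (fst c)) (Rabs (snd c)))
    by (eapply Rle_trans; [apply Rabs_pos|apply Rmax_l]).
  eapply Rle_trans; [apply Cmod_2Rmax|].
  apply Rmult_le_compat; try lra; apply sqrt_pos.
Qed.

Lemma is_derive_Cauchy_Riemann (f : C -> C) (x y a b : R) :
  differentiable_pt_lim (fun u v => fst (f (u, v))) x y a (- b) ->
  differentiable_pt_lim (fun u v => snd (f (u, v))) x y b a ->
  @is_derive C_AbsRing C_NormedModule f (x, y) (a, b).
Proof.
  intros Hre Him; split; [apply is_linear_scal_l|].
  intros z Hz.
  apply (@is_filter_lim_locally_unique C_AbsRing (AbsRing_NormedModule C_AbsRing)) in Hz.
  subst z; intros [e He].
  assert (He2 : 0 < e / 2) by lra.
  destruct (Hre (mkposreal _ He2)) as [d1 Hd1], (Him (mkposreal _ He2)) as [d2 Hd2].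
  exists (mkposreal _ (Rmin_pos _ _ (cond_pos d1) (cond_pos d2))).
  intros [u v] Hb.
  change (Cmod (Cminus (u, v) (x, y)) < Rmin d1 d2) in Hb.
  change (Cmod (Cminus (Cminus (f (u, v)) (f (x, y))) (Cmult (Cminus (u, v) (x, y)) (a, b)))
    <= e * Cmod (Cminus (u, v) (x, y))).
  pose proof (Rmax_Cmod (Cminus (u, v) (x, y))) as HM.
  change (Rmax (Rabs (u - x)) (Rabs (v - y)) <= Cmod (Cminus (u, v) (x, y))) in HM.
  pose proof (Rle_lt_trans _ _ _ (Rmax_l _ _) (Rle_lt_trans _ _ _ HM Hb)) as Hu.
  pose proof (Rle_lt_trans _ _ _ (Rmax_r _ _) (Rle_lt_trans _ _ _ HM Hb)) as Hv.
  pose proof (Rmin_l d1 d2); pose proof (Rmin_r d1 d2).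
  specialize (Hd1 u v ltac:(lra) ltac:(lra)); specialize (Hd2 u v ltac:(lra) ltac:(lra)).
  simpl in Hd1, Hd2.
  replace e with (2 * (e / 2)) by field; rewrite Rmult_assoc.
  apply Cmod_le_of_Rabs_le.
  - eapply Rle_trans; [|apply (Rle_trans _ _ _ Hd1), Rmult_le_compat_l, HM; lra].
    right; f_equal; simpl; ring.
  - eapply Rle_trans; [|apply (Rle_trans _ _ _ Hd2), Rmult_le_compat_l, HM; lra].
    right; f_equal; simpl; ring.
Qed.

Definition Cexp (z : C) : C :=
  (exp (fst z) * cos (snd z), exp (fst z) * sin (snd z)).

Lemma is_derive_Cexp (z : C) : is_C_derive Cexp z (Cexp z).
Proof.
  apply is_derive_C_NormedModule_iff; destruct z as [x y]; simpl.
  apply is_derive_Cauchy_Riemann; simpl.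
  - eapply differentiable_pt_lim_ext_eq.
    4: apply (differentiable_pt_lim_mult (fun u _ => exp u) (fun _ v => cos v));
         [apply (differentiable_pt_lim_comp_1d exp (fun u _ => u)),
            differentiable_pt_lim_fst; apply derivable_pt_lim_exp
         |apply (differentiable_pt_lim_comp_1d cos (fun _ v => v)),
            differentiable_pt_lim_snd; apply derivable_pt_lim_cos].
    all: intros; simpl; ring.
  - eapply differentiable_pt_lim_ext_eq.
    4: apply (differentiable_pt_lim_mult (fun u _ => exp u) (fun _ v => sin v));
         [apply (differentiable_pt_lim_comp_1d exp (fun u _ => u)),
            differentiable_pt_lim_fst; apply derivable_pt_lim_exp
         |apply (differentiable_pt_lim_comp_1d sin (fun _ v => v)),
            differentiable_pt_lim_snd; apply derivable_pt_lim_sin].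
    all: intros; simpl; ring.
Qed.

Definition Clog (z : C) : C := (ln (Cmod z), Arg_rhp z).

Lemma is_derive_Clog (z : C) : 0 < fst z -> is_C_derive Clog z (Cinv z).
Proof.
  intros Hx; apply is_derive_C_NormedModule_iff; destruct z as [x y]; simpl in *.
  assert (HS : 0 < x ^ 2 + y ^ 2) by nra.
  assert (Hsq : 0 < sqrt (x ^ 2 + y ^ 2)) by now apply sqrt_lt_R0.
  pose proof (sqrt_sqrt _ (Rlt_le _ _ HS)) as Hss.
  change (Cinv (x, y)) with (x / (x ^ 2 + y ^ 2), - y / (x ^ 2 + y ^ 2)).
  apply is_derive_Cauchy_Riemann; simpl.
  - eapply differentiable_pt_lim_ext_eq.
    4: apply (differentiable_pt_lim_comp_1d ln (fun u v => sqrt (u ^ 2 + v ^ 2)));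
         [apply derivable_pt_lim_ln, Hsq|].
    4: apply (differentiable_pt_lim_comp_1d sqrt (fun u v => u ^ 2 + v ^ 2));
         [apply derivable_pt_lim_sqrt, HS|].
    4: apply (differentiable_pt_lim_plus (fun u _ => u ^ 2) (fun _ v => v ^ 2));
         [apply (differentiable_pt_lim_comp_1d (fun t => t ^ 2) (fun u _ => u)),
            differentiable_pt_lim_fst
         |apply (differentiable_pt_lim_comp_1d (fun t => t ^ 2) (fun _ v => v)),
            differentiable_pt_lim_snd]; apply derivable_pt_lim_pow.
    all: cbn [pred]; try reflexivity.
    all: replace (INR 2) with 2 by (simpl; ring); set (q := sqrt (x ^ 2 + y ^ 2)) in *.
    all: replace (x * (x * 1) + y * (y * 1)) with (q * q) by (rewrite Hss; ring); field; lra.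
  - eapply differentiable_pt_lim_ext_eq.
    4: apply (differentiable_pt_lim_comp_1d atan (fun u v => v * / u));
         [apply derivable_pt_lim_atan|].
    4: apply (differentiable_pt_lim_mult (fun _ v => v) (fun u _ => / u));
         [apply differentiable_pt_lim_snd|].
    4: apply (differentiable_pt_lim_comp_1d Rinv (fun u _ => u));
         [|apply differentiable_pt_lim_fst].
    4: apply is_derive_Reals, (is_derive_inv (fun t => t)); [apply is_derive_id|lra].
    + reflexivity.
    + simpl; change one with 1; field; nra.
    + simpl; change one with 1; field; nra.
Qed.

Lemma cpowR_Cexp_Clog (u : C) (s : R) : cpowR u s = Cexp (RtoC s * Clog u).
Proof. unfold cpowR, Cexp, Clog; simpl; f_equal; f_equal; f_equal; ring. Qed.

Lemma is_derive_cpowR (u : C) (s : R) : 0 < fst u ->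
  is_C_derive (fun v => cpowR v s) u (RtoC s * Cinv u * cpowR u s)%C.
Proof.
  intros Hu.
  apply (@is_derive_ext C_AbsRing (AbsRing_NormedModule C_AbsRing)
           (fun v => Cexp (RtoC s * Clog v)%C));
    [intros; symmetry; apply cpowR_Cexp_Clog|].
  evar_last.
  - apply (@is_derive_comp _ (AbsRing_NormedModule C_AbsRing) Cexp
             (fun v => RtoC s * Clog v)%C); [apply is_derive_Cexp|].
    apply (is_derive_mult (fun _ => RtoC s) Clog);
      [apply (@is_derive_const _ (AbsRing_NormedModule C_AbsRing))
      |apply is_derive_Clog, Hu|apply Cmult_comm].
  - rewrite <- cpowR_Cexp_Clog.
    change ((RtoC 0 * Clog u + RtoC s * Cinv u) * cpowR u s
            = RtoC s * Cinv u * cpowR u s)%C; ring.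
Qed.

Lemma is_derive_cpown (z : C) (n : nat) :
  is_C_derive (fun t => cpown t n) z (RtoC (INR n) * cpown z (pred n))%C.
Proof.
  induction n as [|n IH]; evar_last.
  - apply (@is_derive_const C_AbsRing (AbsRing_NormedModule C_AbsRing) (RtoC 1)).
  - change (RtoC 0 = RtoC 0 * RtoC 1)%C; ring.
  - apply (is_derive_mult (fun t => t) (fun t => cpown t n));
      [apply is_derive_id|apply IH|apply Cmult_comm].
  - change (Cplus (Cmult (RtoC 1) (cpown z n)) (Cmult z (RtoC (INR n) * cpown z (pred n))%C)
            = RtoC (INR (S n)) * cpown z n)%C.
    rewrite S_INR, RtoC_plus.
    destruct n as [|m]; cbn [pred cpown INR]; ring.
Qed.

Lemma Cinv_cpowR (u : C) (s : R) : Cinv (cpowR u s) = cpowR u (- s).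
Proof.
  unfold cpowR; cbv zeta.
  replace (- s * ln (Cmod u)) with (- (s * ln (Cmod u))) by ring.
  replace (- s * Arg_rhp u) with (- (s * Arg_rhp u)) by ring.
  rewrite exp_Ropp, cos_neg, sin_neg.
  set (m := exp (s * ln (Cmod u))); set (t := s * Arg_rhp u).
  assert (Hm : 0 < m) by apply exp_pos.
  pose proof (sin2_cos2 t) as Hcs; unfold Rsqr in Hcs.
  unfold Cinv; simpl.
  replace (m * cos t * (m * cos t * 1) + m * sin t * (m * sin t * 1)) with (m * m)
    by (transitivity (m * m * (sin t * sin t + cos t * cos t)); [rewrite Hcs|]; ring).
  f_equal; field; lra.
Qed.

Lemma Cmod_cpowR (u : C) (s : R) : Cmod (cpowR u s) = Rpower (Cmod u) s.
Proof.
  unfold cpowR, Cmod at 1, Rpower; cbv zeta; simpl.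
  set (m := exp (s * ln (Cmod u))); set (t := s * Arg_rhp u).
  pose proof (sin2_cos2 t) as Hcs; unfold Rsqr in Hcs.
  replace (m * cos t * (m * cos t * 1) + m * sin t * (m * sin t * 1)) with (m * m)
    by (transitivity (m * m * (sin t * sin t + cos t * cos t)); [rewrite Hcs|]; ring).
  apply sqrt_square; left; apply exp_pos.
Qed.

Lemma Cmod_cpown (z : C) (n : nat) : Cmod (cpown z n) = Cmod z ^ n.
Proof.
  induction n as [|n IH]; simpl; [apply Cmod_1|].
  rewrite Cmod_mult, IH; reflexivity.
Qed.

Lemma exists_Cmod_conj_mul_real (w : C) (r : R) : 0 <= r ->
  exists z : C, Cmod z = r /\ (Cconj w * z)%C = RtoC (Cmod w * r).
Proof.
  intros Hr; destruct (Req_dec (Cmod w) 0) as [H0|H0].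
  - exists (RtoC r); split; [rewrite Cmod_R; apply Rabs_pos_eq, Hr|].
    rewrite H0, (Cmod_eq_0 w H0), Rmult_0_l; apply injective_projections; simpl; ring.
  - pose proof (Cmod_ge_0 w).
    exists (RtoC (r / Cmod w) * w)%C; split.
    + rewrite Cmod_mult, Cmod_R, Rabs_pos_eq; [field; exact H0|].
      apply Rdiv_le_0_compat; lra.
    + replace (Cconj w * (RtoC (r / Cmod w) * w))%C with (RtoC (r / Cmod w) * (w * Cconj w))%C
        by ring.
      rewrite <- Cmod2_conj, <- RtoC_mult; f_equal; field; exact H0.
Qed.

Lemma pow_le_one (x : R) (n : nat) : 0 <= x <= 1 -> x ^ n <= 1.
Proof. intros Hx; rewrite <- (pow1 n); apply pow_incr, Hx. Qed.

Lemma Rpower_mul_Rpower_opp_div (a u : R) (n : nat) : 0 < u ->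
  Rpower u a * (Rpower u (- (a + INR n)) / u) = / u ^ (n + 1).
Proof.
  intros Hu.
  rewrite Rpower_Ropp, Rpower_plus, Rpower_pow, pow_add, pow_1 by exact Hu.
  assert (0 < Rpower u a) by apply exp_pos.
  assert (0 < u ^ n) by now apply pow_lt.
  field; lra.
Qed.

Definition kernel_weight (a : R) (n : nat) (rho u : R) : R :=
  Rpower (1 - rho ^ 2) a * (Rpower u (- (a + INR n)) / u).

Lemma kernel_weight_le (a mu rho u : R) (n : nat) :
  0 < a -> 0 <= mu < 1 -> 0 <= rho < 1 -> 1 - mu * rho <= u ->
  kernel_weight a n rho u <= Rpower 2 a * 2 ^ (n + 1) / (1 - mu ^ 2) ^ (n + 1).
Proof.
  intros Ha Hmu Hrho Hu.
  assert (Hu0 : 0 < u) by nra.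
  assert (Hv : 0 < 1 - mu ^ 2) by nra.
  assert (Hweight : Rpower (1 - rho ^ 2) a <= Rpower 2 a * Rpower u a).
  { rewrite Rpower_mult_distr by lra; apply Rle_Rpower_l; nra. }
  assert (Hpow : (1 - mu ^ 2) ^ (n + 1) <= 2 ^ (n + 1) * u ^ (n + 1)).
  { rewrite <- Rpow_mult_distr; apply pow_incr; nra. }
  assert (0 < (1 - mu ^ 2) ^ (n + 1)) by now apply pow_lt.
  assert (0 < u ^ (n + 1)) by now apply pow_lt.
  assert (0 < Rpower u (- (a + INR n)) / u)
    by (apply Rdiv_lt_0_compat; [apply exp_pos|lra]).
  unfold kernel_weight.
  apply Rle_trans with (Rpower 2 a * (Rpower u a * (Rpower u (- (a + INR n)) / u))).
  - rewrite <- Rmult_assoc; apply Rmult_le_compat_r; lra.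
  - rewrite Rpower_mul_Rpower_opp_div by exact Hu0.
    unfold Rdiv; rewrite Rmult_assoc; apply Rmult_le_compat_l; [left; apply exp_pos|].
    apply (Rmult_le_reg_r (u ^ (n + 1) * (1 - mu ^ 2) ^ (n + 1))); [nra|].
    field_simplify; lra.
Qed.

(* [(1 + mu) / 2] and [1 - mu (1 + mu) / 2] are [|z|] and [|1 - conj w z|] at the test point
   [z = (1 + |w|) / 2 * w / |w|] used for the lower bounds, with [mu = |w|]. *)
Lemma kernel_weight_ge (a mu : R) (n : nat) :
  0 < a -> 0 <= mu < 1 ->
  Rpower (/ 4) a / (1 - mu ^ 2) ^ (n + 1)
    <= kernel_weight a n ((1 + mu) / 2) (1 - mu * ((1 + mu) / 2)).
Proof.
  intros Ha Hmu.
  set (rho := (1 + mu) / 2); set (u := 1 - mu * rho); set (v := 1 - mu ^ 2).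
  assert (Hv : 0 < v) by (unfold v; nra).
  assert (Hu : 0 < u <= v) by (unfold u, v, rho; nra).
  assert (Hweight : Rpower (/ 4) a * Rpower v a <= Rpower (1 - rho ^ 2) a).
  { rewrite Rpower_mult_distr by lra; apply Rle_Rpower_l; unfold rho, v in *; nra. }
  assert (Hkernel : Rpower v (- (a + INR n)) / v <= Rpower u (- (a + INR n)) / u).
  { assert (0 < a + INR n) by (pose proof (pos_INR n); lra).
    assert (Rpower u (a + INR n) <= Rpower v (a + INR n)) by (apply Rle_Rpower_l; lra).
    assert (0 < Rpower u (a + INR n)) by apply exp_pos.
    rewrite !Rpower_Ropp; unfold Rdiv; rewrite <- !Rinv_mult.
    apply Rinv_le_contravar; [nra|apply Rmult_le_compat; lra]. }
  assert (0 < Rpower v (- (a + INR n)) / v)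
    by (apply Rdiv_lt_0_compat; [apply exp_pos|lra]).
  unfold kernel_weight; fold rho u v.
  apply Rle_trans with (Rpower (/ 4) a * (Rpower v a * (Rpower v (- (a + INR n)) / v))).
  - rewrite Rpower_mul_Rpower_opp_div by exact Hv; lra.
  - rewrite <- Rmult_assoc; apply Rmult_le_compat; try lra.
    apply Rmult_le_pos; left; apply exp_pos.
Qed.

(** * The functions f_w^[i] and their derivatives *)

Definition kernel_base (w z : C) : C := (1 - Cconj w * z)%C.

Lemma Cmod_kernel_base_ge (w z : C) : 1 - Cmod w * Cmod z <= Cmod (kernel_base w z).
Proof.
  pose proof (Cmod_triangle (kernel_base w z) (Cconj w * z)%C) as T.
  unfold kernel_base in *.
  replace (1 - Cconj w * z + Cconj w * z)%C with (RtoC 1) in T by ring.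
  rewrite Cmod_1, Cmod_mult, Cmod_conj in T; lra.
Qed.

Lemma Re_kernel_base_pos (w z : C) : inD w -> inD z -> 0 < fst (kernel_base w z).
Proof.
  unfold inD; intros Hw Hz.
  pose proof (re_le_Cmod (Cconj w * z)%C) as Hre.
  rewrite Cmod_mult, Cmod_conj in Hre.
  assert (Cmod w * Cmod z < 1) by (pose proof (Cmod_ge_0 z); nra).
  pose proof (Rle_abs (Re (Cconj w * z))).
  change (0 < 1 - Re (Cconj w * z)); lra.
Qed.

Lemma kernel_base_neq0 (w z : C) : inD w -> inD z -> kernel_base w z <> RtoC 0.
Proof.
  intros Hw Hz E; pose proof (Re_kernel_base_pos w z Hw Hz) as H.
  rewrite E in H; simpl in H; lra.
Qed.

Lemma is_derive_kernel_base (w z : C) : is_C_derive (kernel_base w) z (- Cconj w)%C.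
Proof.
  apply (@is_derive_ext _ (AbsRing_NormedModule C_AbsRing)
           (fun t => minus (RtoC 1) (Cconj w * t)%C)); [reflexivity|].
  evar_last.
  - apply (@is_derive_minus _ (AbsRing_NormedModule C_AbsRing)
             (fun _ => RtoC 1) (fun t => Cconj w * t)%C);
      [apply (@is_derive_const C_AbsRing (AbsRing_NormedModule C_AbsRing) (RtoC 1))|].
    apply (is_derive_mult (fun _ => Cconj w) (fun t => t));
      [apply (@is_derive_const C_AbsRing (AbsRing_NormedModule C_AbsRing))
      |apply is_derive_id|apply Cmult_comm].
  - change (RtoC 0 - (RtoC 0 * z + Cconj w * RtoC 1) = - Cconj w)%C; ring.
Qed.

Lemma fw_eq (alpha : R) (i : nat) (w z : C) :
  fw alpha i w z = (cpown z i * cpowR (kernel_base w z) (- (alpha + INR i)))%C.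
Proof. unfold fw, Cdiv; rewrite Cinv_cpowR; reflexivity. Qed.

Definition fw_deriv_factor (alpha : R) (i : nat) (w z : C) : C :=
  (RtoC (INR i) * cpown z (pred i) + RtoC alpha * Cconj w * cpown z i)%C.

Lemma is_derive_fw (alpha : R) (i : nat) (w z : C) : inD w -> inD z ->
  @is_derive C_AbsRing C_NormedModule (fw alpha i w) z
    (cpowR (kernel_base w z) (- (alpha + INR i)) / kernel_base w z
       * fw_deriv_factor alpha i w z)%C.
Proof.
  intros Hw Hz; apply is_derive_C_NormedModule_iff.
  set (s := - (alpha + INR i)).
  apply (@is_derive_ext _ (AbsRing_NormedModule C_AbsRing)
           (fun t => cpown t i * cpowR (kernel_base w t) s)%C);
    [intros; symmetry; apply fw_eq|].
  evar_last.
  - apply (is_derive_mult (fun t => cpown t i) (fun t => cpowR (kernel_base w t) s));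
      [apply is_derive_cpown| |apply Cmult_comm].
    apply (@is_derive_comp _ (AbsRing_NormedModule C_AbsRing) (fun v => cpowR v s));
      [apply is_derive_cpowR, Re_kernel_base_pos; assumption|apply is_derive_kernel_base].
  - pose proof (kernel_base_neq0 w z Hw Hz) as HU.
    set (P := cpowR (kernel_base w z) s); unfold s; clearbody P.
    change (RtoC (INR i) * cpown z (pred i) * P
            + cpown z i * (- Cconj w * (RtoC (- (alpha + INR i)) * / kernel_base w z * P))
            = P / kernel_base w z
              * (RtoC (INR i) * cpown z (pred i) + RtoC alpha * Cconj w * cpown z i))%C.
    rewrite RtoC_opp, RtoC_plus.
    unfold kernel_base in *; destruct i as [|k]; cbn [cpown pred].
    + change (INR 0) with 0; field; exact HU.
    + rewrite S_INR, RtoC_plus; field; exact HU.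
Qed.

Lemma analytic_on_D_fw (alpha : R) (i : nat) (w : C) : inD w -> analytic_on_D (fw alpha i w).
Proof. intros Hw z Hz; eexists; now apply is_derive_fw. Qed.

Lemma fw_deriv_factor_S (alpha : R) (k : nat) (w z : C) :
  fw_deriv_factor alpha (S k) w z
  = (cpown z k * (RtoC (INR (S k)) + RtoC alpha * (Cconj w * z)))%C.
Proof. unfold fw_deriv_factor; cbn [pred cpown]; ring. Qed.

Lemma Cmod_fw_at_0_le (alpha : R) (i : nat) (w : C) : Cmod (fw alpha i w (RtoC 0)) <= 1.
Proof.
  rewrite fw_eq, Cmod_mult, Cmod_cpown, Cmod_cpowR.
  replace (kernel_base w (RtoC 0)) with (RtoC 1) by (unfold kernel_base; ring).
  rewrite Cmod_0, Cmod_1; unfold Rpower; rewrite ln_1, Rmult_0_r, exp_0.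
  destruct i; simpl; lra.
Qed.

Lemma Cmod_fw_deriv_factor_le (alpha : R) (i : nat) (w z : C) :
  0 < alpha -> inD w -> inD z -> Cmod (fw_deriv_factor alpha i w z) <= INR i + alpha.
Proof.
  unfold inD, fw_deriv_factor; intros Ha Hw Hz.
  pose proof (Cmod_ge_0 w); pose proof (Cmod_ge_0 z); pose proof (pos_INR i).
  assert (Hpow : forall n, 0 <= Cmod z ^ n <= 1)
    by (intros n; split; [apply pow_le|apply pow_le_one]; lra).
  pose proof (Hpow i); pose proof (Hpow (pred i)).
  eapply Rle_trans; [apply Cmod_triangle|].
  rewrite !Cmod_mult, Cmod_conj, !Cmod_cpown, !Cmod_R, !Rabs_pos_eq by lra.
  assert (Cmod w * Cmod z ^ i <= 1) by nra.
  apply Rplus_le_compat; [|rewrite Rmult_assoc]; nra.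
Qed.

Lemma weighted_Cmod_derive_fw (alpha : R) (i : nat) (w z l : C) :
  inD w -> inD z -> @is_derive C_AbsRing C_NormedModule (fw alpha i w) z l ->
  Rpower (1 - Cmod z ^ 2) alpha * Cmod l
  = kernel_weight alpha i (Cmod z) (Cmod (kernel_base w z))
    * Cmod (fw_deriv_factor alpha i w z).
Proof.
  intros Hw Hz Hl.
  rewrite <- (is_C_derive_unique _ _ _ Hl),
    (is_C_derive_unique _ _ _ (is_derive_fw alpha i w z Hw Hz)).
  rewrite Cmod_mult, Cmod_div, Cmod_cpowR by now apply kernel_base_neq0.
  unfold kernel_weight; ring.
Qed.

(** * Estimates of the Bloch-type norm *)

Lemma Bnorm_le_of_bound (alpha : R) (f : C -> C) (M : R) :
  (forall z l, inD z -> @is_derive C_AbsRing C_NormedModule f z l ->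
     Rpower (1 - Cmod z ^ 2) alpha * Cmod l <= M) ->
  Rbar_le (Bnorm alpha f) (Finite (Cmod (f (RtoC 0)) + M)).
Proof.
  intros HM; unfold Bnorm.
  match goal with |- context [Lub_Rbar ?E] =>
    assert (Hlub : Rbar_le (Lub_Rbar E) (Finite M))
      by (apply Lub_Rbar_correct; intros r (z & Hz & l & Hl & ->); now apply HM);
    destruct (Lub_Rbar E) end; simpl in *; lra.
Qed.

Lemma Bnorm_ge_of_derive (alpha : R) (f : C -> C) (z l : C) :
  inD z -> @is_derive C_AbsRing C_NormedModule f z l ->
  Rbar_le (Finite (Rpower (1 - Cmod z ^ 2) alpha * Cmod l)) (Bnorm alpha f).
Proof.
  intros Hz Hl; unfold Bnorm.
  pose proof (Cmod_ge_0 (f (RtoC 0))).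
  match goal with |- context [Lub_Rbar ?E] =>
    assert (Hlub : Rbar_le (Finite (Rpower (1 - Cmod z ^ 2) alpha * Cmod l)) (Lub_Rbar E))
      by (apply Lub_Rbar_correct; exists z; split; [exact Hz|now exists l]);
    destruct (Lub_Rbar E) end; simpl in *; lra.
Qed.

Definition fw_upper_const (alpha : R) (i : nat) : R :=
  1 + (INR i + alpha) * (Rpower 2 alpha * 2 ^ (i + 1)).

Lemma fw_upper_const_pos (alpha : R) (i : nat) : 0 < alpha -> 0 < fw_upper_const alpha i.
Proof.
  intros Ha; unfold fw_upper_const; apply Rplus_lt_le_0_compat; [lra|].
  apply Rmult_le_pos; [pose proof (pos_INR i); lra|].
  apply Rmult_le_pos; [left; apply exp_pos|apply pow_le; lra].
Qed.

Lemma Bnorm_fw_le (alpha : R) (i : nat) (w : C) : 0 < alpha -> inD w ->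
  Rbar_le (Bnorm alpha (fw alpha i w))
    (Finite (fw_upper_const alpha i / (1 - Cmod w ^ 2) ^ (i + 1))).
Proof.
  intros Ha Hw; unfold fw_upper_const.
  pose proof (Cmod_ge_0 w) as Hw0; unfold inD in Hw.
  assert (Hv : 0 < (1 - Cmod w ^ 2) ^ (i + 1)) by (apply pow_lt; nra).
  assert (Hv1 : (1 - Cmod w ^ 2) ^ (i + 1) <= 1) by (apply pow_le_one; split; nra).
  eapply Rbar_le_trans.
  - apply (Bnorm_le_of_bound _ _
             ((INR i + alpha) * (Rpower 2 alpha * 2 ^ (i + 1) / (1 - Cmod w ^ 2) ^ (i + 1)))).
    intros z l Hz Hl; rewrite (weighted_Cmod_derive_fw alpha i w z l Hw Hz Hl), Rmult_comm.
    pose proof (Cmod_ge_0 z); unfold inD in Hz.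
    apply Rmult_le_compat; [apply Cmod_ge_0| |now apply Cmod_fw_deriv_factor_le|].
    + apply Rmult_le_pos; [left; apply exp_pos|].
      apply Rdiv_le_0_compat; [left; apply exp_pos|].
      pose proof (Cmod_kernel_base_ge w z); nra.
    + apply kernel_weight_le; try split; try lra; apply Cmod_kernel_base_ge.
  - cbn [Rbar_le]; pose proof (Cmod_fw_at_0_le alpha i w).
    set (v := (1 - Cmod w ^ 2) ^ (i + 1)) in *.
    assert (1 <= / v) by (rewrite <- Rinv_1 at 1; apply Rinv_le_contravar; lra).
    apply Rle_trans with (/ v + (INR i + alpha) * (Rpower 2 alpha * 2 ^ (i + 1) / v));
      [lra|right; field; lra].
Qed.

Lemma Bnorm_fw_ge (alpha : R) (i : nat) (w z : C) :
  0 < alpha -> inD w -> Cmod z = (1 + Cmod w) / 2 ->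
  (Cconj w * z)%C = RtoC (Cmod w * ((1 + Cmod w) / 2)) ->
  Rbar_le (Finite (Rpower (/ 4) alpha / (1 - Cmod w ^ 2) ^ (i + 1)
                   * Cmod (fw_deriv_factor alpha i w z)))
          (Bnorm alpha (fw alpha i w)).
Proof.
  intros Ha Hw Hz Hwz.
  pose proof (Cmod_ge_0 w); unfold inD in Hw.
  assert (HzD : inD z) by (unfold inD; lra).
  assert (HU : Cmod (kernel_base w z) = 1 - Cmod w * ((1 + Cmod w) / 2)).
  { unfold kernel_base; rewrite Hwz, <- RtoC_minus, Cmod_R; apply Rabs_pos_eq; nra. }
  pose proof (is_derive_fw alpha i w z Hw HzD) as Hl.
  eapply Rbar_le_trans; [|apply (Bnorm_ge_of_derive alpha _ z _ HzD Hl)].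
  cbn [Rbar_le]; rewrite (weighted_Cmod_derive_fw alpha i w z _ Hw HzD Hl).
  apply Rmult_le_compat_r; [apply Cmod_ge_0|].
  rewrite Hz, HU; apply kernel_weight_ge; lra.
Qed.

Lemma Bnorm_fw_S_ge (alpha : R) (k : nat) (w : C) : 0 < alpha -> inD w ->
  Rbar_le (Finite (Rpower (/ 4) alpha * (/ 2) ^ k / (1 - Cmod w ^ 2) ^ (S k + 1)))
          (Bnorm alpha (fw alpha (S k) w)).
Proof.
  intros Ha Hw.
  pose proof (Cmod_ge_0 w) as Hw0; pose proof Hw as HwD; unfold inD in Hw.
  set (r := (1 + Cmod w) / 2).
  destruct (exists_Cmod_conj_mul_real w r) as (z & Hz & Hwz); [unfold r; lra|].
  eapply Rbar_le_trans; [|apply (Bnorm_fw_ge alpha (S k) w z Ha HwD Hz Hwz)].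
  cbn [Rbar_le].
  rewrite fw_deriv_factor_S, Hwz, <- RtoC_mult, <- RtoC_plus, Cmod_mult, Cmod_cpown, Hz, Cmod_R.
  assert (Hv : 0 < (1 - Cmod w ^ 2) ^ (S k + 1)) by (apply pow_lt; nra).
  assert ((/ 2) ^ k <= r ^ k) by (apply pow_incr; unfold r; lra).
  assert (1 <= Rabs (INR (S k) + alpha * (Cmod w * r))).
  { rewrite S_INR; pose proof (pos_INR k).
    rewrite Rabs_pos_eq; unfold r in *; nra. }
  assert (0 < Rpower (/ 4) alpha / (1 - Cmod w ^ 2) ^ (S k + 1))
    by (apply Rdiv_lt_0_compat; [apply exp_pos|exact Hv]).
  assert (0 <= (/ 2) ^ k) by (apply pow_le; lra).
  unfold Rdiv; rewrite Rmult_assoc, (Rmult_comm ((/ 2) ^ k)), <- Rmult_assoc.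
  apply Rmult_le_compat_l; [lra|].
  rewrite <- (Rmult_1_r ((/ 2) ^ k)); apply Rmult_le_compat; lra.
Qed.

Lemma Bnorm_fw_O_ge (alpha : R) (w : C) : 0 < alpha -> inD w -> 1 / 2 < Cmod w ->
  Rbar_le (Finite (Rpower (/ 4) alpha * (alpha / 2) / (1 - Cmod w ^ 2)))
          (Bnorm alpha (fw alpha 0 w)).
Proof.
  intros Ha Hw Hbig.
  pose proof Hw as HwD; unfold inD in Hw.
  destruct (exists_Cmod_conj_mul_real w ((1 + Cmod w) / 2)) as (z & Hz & Hwz); [lra|].
  eapply Rbar_le_trans; [|apply (Bnorm_fw_ge alpha 0 w z Ha HwD Hz Hwz)].
  cbn [Rbar_le].
  replace (fw_deriv_factor alpha 0 w z) with (RtoC alpha * Cconj w)%C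
    by (unfold fw_deriv_factor; cbn [pred cpown INR]; ring).
  rewrite Cmod_mult, Cmod_conj, Cmod_R, Rabs_pos_eq, Nat.add_0_l, pow_1 by lra.
  assert (Hv : 0 < 1 - Cmod w ^ 2) by nra.
  apply Rle_trans with (Rpower (/ 4) alpha / (1 - Cmod w ^ 2) * (alpha / 2));
    [right; field; lra|apply Rmult_le_compat_l; [|nra]].
  left; apply Rdiv_lt_0_compat; [apply exp_pos|exact Hv].
Qed.

Theorem lemma2p4 (alpha : R) (Halpha : 0 < alpha) :
  (forall i : nat, (1 <= i)%nat ->
    exists C1 C2 : R, 0 < C1 /\ 0 < C2 /\
      forall w : C, inD w ->
        analytic_on_D (fw alpha i w) /\
        Rbar_le (Finite (C1 / (1 - Cmod w ^ 2) ^ (i + 1))) (Bnorm alpha (fw alpha i w)) /\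
        Rbar_le (Bnorm alpha (fw alpha i w)) (Finite (C2 / (1 - Cmod w ^ 2) ^ (i + 1))))
  /\
  (exists C1 C2 : R, 0 < C1 /\ 0 < C2 /\
      forall w : C, inD w -> 1 / 2 < Cmod w ->
        analytic_on_D (fw alpha 0 w) /\
        Rbar_le (Finite (C1 / (1 - Cmod w ^ 2))) (Bnorm alpha (fw alpha 0 w)) /\
        Rbar_le (Bnorm alpha (fw alpha 0 w)) (Finite (C2 / (1 - Cmod w ^ 2)))).
Proof.
  split.
  - intros [|k] Hk; [inversion Hk|].
    exists (Rpower (/ 4) alpha * (/ 2) ^ k), (fw_upper_const alpha (S k)).
    split; [apply Rmult_lt_0_compat; [apply exp_pos|apply pow_lt; lra]|].
    split; [now apply fw_upper_const_pos|].
    intros w Hw; split; [|split].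
    + now apply analytic_on_D_fw.
    + now apply Bnorm_fw_S_ge.
    + now apply Bnorm_fw_le.
  - exists (Rpower (/ 4) alpha * (alpha / 2)), (fw_upper_const alpha 0).
    split; [apply Rmult_lt_0_compat; [apply exp_pos|lra]|].
    split; [now apply fw_upper_const_pos|].
    intros w Hw Hbig; split; [|split].
    + now apply analytic_on_D_fw.
    + now apply Bnorm_fw_O_ge.
    + pose proof (Bnorm_fw_le alpha 0 w Halpha Hw) as H.
      now rewrite Nat.add_0_l, pow_1 in H.
Qed.
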